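(* Suppose $n<p$. If $q\in[0,2]$, then $$\inf_{A\in\mathbb{R}^{n\times p}}\ \inf_{\delta:\mathbb{R}^n\to\mathbb{R}}\ \sup_{x\in\mathbb{R}^p\setminus\{0\}}\Big|\frac{\delta(Ax)}{s_q(x)}-1\Big|\ge\frac1{2\pi e}\Big(1-\frac np\Big)^2-\frac1{2p}.$$ If $q\in(2,\infty]$, then $$\inf_{A\in\mathbb{R}^{n\times p}}\ \inf_{\delta:\mathbb{R}^n\to\mathbb{R}}\ \sup_{x\in\mathbb{R}^p\setminus\{0\}}\Big|\frac{\delta(Ax)}{s_q(x)}-1\Big|\ge\frac1{\sqrt{2\pi e}}\cdot\frac{1-(n/p)}{1+\sqrt{16\log(2p)}}-\frac1{2p}.$$
   Context: The infimum over $\delta$ is over all functions $\mathbb{R}^n\to\mathbb{R}$ (estimators using noiseless deterministic measurements $y=Ax$). For $x\in\mathbb{R}^p\setminus\{0\}$ let $\pi_j(x):=|x_j|/\|x\|_1$. For $q\notin\{0,1,\infty\}$, $s_q(x):=(\|x\|_q/\|x\|_1)^{q/(1-q)}=\exp\big(\frac1{1-q}\log\sum_j\pi_j(x)^q\big)$; $s_0(x):=\|x\|_0$ (number of nonzero entries), $s_1(x):=\exp\big(-\sum_j\pi_j(x)\log\pi_j(x)\big)$, $s_\infty(x):=\|x\|_1/\|x\|_\infty$ (these are the limits of $s_q$ as $q\to0,1,\infty$). *)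

From HB Require Import structures.
From mathcomp Require Import all_boot all_order all_algebra.
From mathcomp Require Import all_classical all_reals all_analysis.
Set Implicit Arguments. Unset Strict Implicit. Unset Printing Implicit Defensive.
Import Order.TTheory GRing.Theory Num.Theory.
Local Open Scope ring_scope.
Local Open Scope classical_set_scope.

Section Defs.
Variables (R : realType) (p : nat).
Implicit Types (x : 'cV[R]_p).

Definition l1norm x : R := \sum_(j < p) `|x j 0|.
Definition linfnorm x : R := \big[Num.max/0]_(j < p) `|x j 0|.
Definition lqnorm (q : R) x : R := (\sum_(j < p) `|x j 0| `^ q) `^ q^-1.
Definition pij x (j : 'I_p) : R := `|x j 0| / l1norm x.

Definition s_real (q : R) x : R :=
  if q == 0 then (#|[set j : 'I_p | x j 0 != 0]|)%:R
  else if q == 1 then expR (- \sum_(j < p) pij x j * ln (pij x j))  (* entropy; 0 log 0 = 0 *)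
  else (lqnorm q x / l1norm x) `^ (q / (1 - q)).

(* s_q for q in [0, +oo]; q = +oo gives ||x||_1/||x||_oo; -oo is never used *)
Definition s_q (q : \bar R) x : R :=
  match q with
  | r%:E => s_real r x
  | +oo%E => l1norm x / linfnorm x
  | -oo%E => 0
  end.
End Defs.

Definition worst_err (R : realType) (n p : nat) (q : \bar R)
  (A : 'M[R]_(n, p)) (delta : 'cV[R]_n -> R) : \bar R :=
  ereal_sup [set (`|delta (A *m x) / s_q q x - 1|)%:E | x in [set x : 'cV[R]_p | x != 0]].

Definition minimax_err (R : realType) (n p : nat) (q : \bar R) : \bar R :=
  ereal_inf [set ereal_inf [set worst_err q A delta | delta in [set: 'cV[R]_n -> R]]
            | A in [set: 'M[R]_(n, p)]].

From HB Require Import structures.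
From mathcomp Require Import all_boot all_order all_algebra.
From mathcomp Require Import all_classical all_reals all_analysis.
From mathcomp Require Import ring lra.
Import Order.TTheory GRing.Theory Num.Theory.
Local Open Scope ring_scope.
Set Implicit Arguments. Unset Strict Implicit. Unset Printing Implicit Defensive.

(* A matrix with n < p columns has a nonzero kernel vector w.  Moving a unit
   vector e_j along w to v = e_j + t w, with t chosen so that two entries of v
   share the largest modulus M, leaves the measurement unchanged (A v = A e_j)
   while s_q(e_j) = 1 and s_q(v) >= ||v||_1 / M >= 2 for every q in [0, oo].
   An estimator sees the same data for both vectors, so its relative error is
   at least 1/3 on one of them.  Both claimed bounds are at most 1/3 - 1/(2p)
   because 2 pi e >= 9, and they are negative when p = 1. *)

Section PowerComparison.
Variable R : realType.
Implicit Types a M r s : R.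

Lemma powR_split a r : 0 < a -> a `^ r = a * a `^ (r - 1).
Proof.
move=> a0; rewrite -{2}(powRr1 (ltW a0)) -powRD; last by rewrite (gt_eqF a0) implybT.
by rewrite addrC subrK.
Qed.

Lemma ler_powR_npos a M s : 0 < a -> a <= M -> s <= 0 -> M `^ s <= a `^ s.
Proof.
move=> a0 aM s0; have M0 := lt_le_trans a0 aM.
by rewrite /powR !gt_eqF // ler_expR ler_wnM2l // ler_ln ?posrE.
Qed.

Lemma ler_powR_nneg a M s : 0 < a -> a <= M -> 0 <= s -> a `^ s <= M `^ s.
Proof.
move=> a0 aM s0; have M0 := lt_le_trans a0 aM.
by rewrite /powR !gt_eqF // ler_expR ler_wpM2l // ler_ln ?posrE.
Qed.

Lemma mul_powR_le_powR a M r : 0 <= a -> a <= M -> r <= 1 ->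
  a * M `^ (r - 1) <= a `^ r.
Proof.
move=> a0 aM r1; have [->|a_neq0] := eqVneq a 0; first by rewrite mul0r powR_ge0.
have a_gt0 : 0 < a by rewrite lt_neqAle eq_sym a_neq0.
by rewrite (powR_split r a_gt0) ler_wpM2l // ler_powR_npos // subr_le0.
Qed.

Lemma powR_le_mul_powR a M r : 0 <= a -> a <= M -> 1 <= r ->
  a `^ r <= a * M `^ (r - 1).
Proof.
move=> a0 aM r1; have [->|a_neq0] := eqVneq a 0.
  by rewrite mul0r powR0 // gt_eqF // (lt_le_trans ltr01).
have a_gt0 : 0 < a by rewrite lt_neqAle eq_sym a_neq0.
by rewrite (powR_split r a_gt0) ler_wpM2l // ler_powR_nneg // subr_ge0.
Qed.

End PowerComparison.

Section NormBounds.
Variables (R : realType) (p : nat).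
Implicit Types v : 'cV[R]_p.

Lemma cV_neq0_entry v : v != 0 -> exists i, v i 0 != 0.
Proof.
move=> v_neq0; apply/not_existsP => v0; move/eqP: v_neq0; apply.
apply/matrixP => i j; rewrite (ord1 j) mxE.
by apply/eqP/negPn/negP => /v0.
Qed.

Lemma l1norm_gt0 v : v != 0 -> 0 < l1norm v.
Proof.
move=> /cV_neq0_entry [i vi]; rewrite /l1norm (bigD1 i) //=.
by rewrite ltr_pwDl ?normr_gt0 ?sumr_ge0.
Qed.

Lemma linfnorm_gt0 v : v != 0 -> 0 < linfnorm v.
Proof.
move=> /cV_neq0_entry [i vi]; rewrite (lt_le_trans _ (le_bigmax _ _ i)) //.
by rewrite normr_gt0.
Qed.

Lemma linfnorm_le v M : 0 <= M -> (forall i, `|v i 0| <= M) -> linfnorm v <= M.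
Proof. by move=> M0 vM; apply: bigmax_le. Qed.

End NormBounds.

Section SqLowerBound.
Variables (R : realType) (p : nat) (v : 'cV[R]_p) (M : R).
Hypotheses (M_gt0 : 0 < M) (v_le_M : forall i, `|v i 0| <= M) (v_neq0 : v != 0).

Let L_gt0 : 0 < l1norm v := l1norm_gt0 v_neq0.

Lemma l1norm_div_le_card_support :
  l1norm v / M <= #|[set j | v j 0 != 0]%classic|%:R.
Proof.
have -> : #|[set j | v j 0 != 0]%classic| = #|[set j | v j 0 != 0]|.
  by apply: eq_card => i; rewrite !inE /in_mem /mem /= /in_set asboolb.
rewrite ler_pdivrMr // mulr_natl -sumr_const.
have -> : l1norm v = \sum_(j in [set j | v j 0 != 0]) `|v j 0|.
  rewrite /l1norm [RHS]big_mkcond /=; apply: eq_bigr => i _; rewrite inE.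
  by case: (v i 0 =P 0) => [->|]; rewrite ?normr0.
by rewrite ler_sum.
Qed.

Lemma l1norm_div_le_expR_entropy :
  l1norm v / M <= expR (- \sum_(j < p) pij v j * ln (pij v j)).
Proof.
rewrite -[leLHS]lnK ?posrE ?divr_gt0 // ler_expR lerNr.
have entry_bound j : pij v j * ln (pij v j) <= pij v j * ln (M / l1norm v).
  rewrite /pij; have [->|vj_neq0] := eqVneq (v j 0) 0.
    by rewrite normr0 !mul0r.
  have vj_gt0 : 0 < `|v j 0| by rewrite normr_gt0.
  apply: ler_wpM2l; first by rewrite divr_ge0 // ltW.
  rewrite ler_ln ?posrE ?divr_gt0 //.
  by apply: ler_wpM2r; rewrite ?invr_ge0 ?(ltW L_gt0).
rewrite (le_trans (ler_sum _ (fun j _ => entry_bound j))) //.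
rewrite -big_distrl /= /pij -big_distrl /= -/(l1norm v) mulfV ?gt_eqF // mul1r.
by rewrite -invf_div lnV ?posrE ?divr_gt0.
Qed.

Lemma l1norm_div_le_lq_ratio r : 0 < r -> r != 1 ->
  l1norm v / M <= (lqnorm r v / l1norm v) `^ (r / (1 - r)).
Proof.
move=> r_gt0 r_neq1; rewrite /lqnorm.
set S := \sum_(j < p) `|v j 0| `^ r.
have S_gt0 : 0 < S.
  have [i vi] := cV_neq0_entry v_neq0; rewrite /S (bigD1 i) //=.
  by rewrite ltr_pwDl ?powR_gt0 ?normr_gt0 // sumr_ge0 // => j _; rewrite powR_ge0.
have S_vs_L : 0 <= (1 - r) * (ln S - ln (l1norm v * M `^ (r - 1))).
  have LM_gt0 : 0 < l1norm v * M `^ (r - 1) by rewrite mulr_gt0 ?powR_gt0.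
  have LME : l1norm v * M `^ (r - 1) = \sum_(j < p) `|v j 0| * M `^ (r - 1).
    by rewrite /l1norm big_distrl.
  have [r_lt1|r_gt1|r_eq1] := ltgtP r 1; last by rewrite r_eq1 eqxx in r_neq1.
  - apply: mulr_ge0; first by rewrite subr_ge0 ltW.
    rewrite subr_ge0 ler_ln ?posrE // LME /S.
    by apply: ler_sum => j _; exact: mul_powR_le_powR (v_le_M j) (ltW r_lt1).
  - rewrite nmulr_rge0 ?subr_lt0 // subr_le0 ler_ln ?posrE // LME /S.
    by apply: ler_sum => j _; exact: powR_le_mul_powR (v_le_M j) (ltW r_gt1).
rewrite [leRHS]/powR gt_eqF ?divr_gt0 ?powR_gt0 //.
rewrite -[leLHS]lnK ?posrE ?divr_gt0 // ler_expR -subr_ge0.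
rewrite lnM ?posrE ?powR_gt0 // ln_powR in S_vs_L.
rewrite !lnM ?posrE ?powR_gt0 ?invr_gt0 // !lnV ?posrE // ln_powR.
have r1_neq0 : 1 - r != 0 by rewrite subr_eq0 eq_sym.
set lS := ln S in S_vs_L *; set lL := ln (l1norm v) in S_vs_L *.
set lM := ln M in S_vs_L *.
have -> : r / (1 - r) * (r^-1 * lS + - lL) - (lL + - lM)
    = (1 - r) * (lS - (lL + (r - 1) * lM)) / (1 - r) ^+ 2.
  by field; rewrite r1_neq0 gt_eqF.
by rewrite divr_ge0 ?sqr_ge0.
Qed.

Lemma l1norm_div_le_s_q (q : \bar R) : (0%:E <= q)%E -> l1norm v / M <= s_q q v.
Proof.
case: q => [r| |] //= r_ge0; last first.
  rewrite ler_pM2l // lef_pV2 ?posrE ?linfnorm_gt0 //.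
  exact: linfnorm_le (ltW M_gt0) v_le_M.
rewrite lee_fin in r_ge0; rewrite /s_real.
have [_|r_neq0] := eqVneq r 0; first exact: l1norm_div_le_card_support.
have [_|r_neq1] := eqVneq r 1; first exact: l1norm_div_le_expR_entropy.
by rewrite l1norm_div_le_lq_ratio // lt_neqAle eq_sym r_neq0.
Qed.

End SqLowerBound.

Section UnitVector.
Variables (R : realType) (p : nat) (j : 'I_p).
Let e : 'cV[R]_p := delta_mx j 0.

Lemma deltaE i : e i 0 = (i == j)%:R.
Proof. by rewrite mxE andbT. Qed.

Lemma delta_neq0 : e != 0.
Proof.
apply/eqP => /matrixP /(_ j 0); rewrite deltaE eqxx mxE => /eqP.
by rewrite oner_eq0.
Qed.

Lemma sum_delta (f : R -> R) : f 0 = 0 -> \sum_(i < p) f `|e i 0| = f 1.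
Proof.
move=> f0; rewrite (bigD1 j) //= deltaE eqxx normr1 big1 ?addr0 // => i /negbTE.
by rewrite deltaE => ->; rewrite normr0.
Qed.

Lemma l1norm_delta : l1norm e = 1.
Proof. by rewrite /l1norm (@sum_delta id). Qed.

Lemma s_q_delta (q : \bar R) : (0%:E <= q)%E -> s_q q e = 1.
Proof.
case: q => [r| |] //= r_ge0; last first.
  rewrite l1norm_delta; suff -> : linfnorm e = 1 by rewrite divr1.
  apply/eqP; rewrite eq_le linfnorm_le //=; last first.
    by move=> i; rewrite deltaE; case: (i == j); rewrite ?normr1 ?normr0.
  by have := le_bigmax 0 (fun i => `|e i 0|) j; rewrite deltaE eqxx normr1.
rewrite /s_real; have [_|r_neq0] := eqVneq r 0.
  have -> : #|[set i | e i 0 != 0]%classic| = #|[set j]|.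
    apply: eq_card => i; rewrite !inE /in_mem /mem /= /in_set asboolb deltaE.
    by case: (i == j); rewrite ?oner_eq0 ?eqxx.
  by rewrite cards1.
have [_|r_neq1] := eqVneq r 1.
  rewrite big1 ?oppr0 ?expR0 // => i _; rewrite /pij l1norm_delta divr1 deltaE.
  by case: (i == j); rewrite ?normr1 ?ln1 ?mulr0 ?normr0 ?mul0r.
rewrite /lqnorm l1norm_delta divr1 (@sum_delta (fun a => a `^ r)); last by rewrite powR0.
by rewrite !powR1.
Qed.

End UnitVector.

Lemma mulmx_ker_neq0 (F : fieldType) n p (A : 'M[F]_(n, p)) : (n < p)%N ->
  exists2 w : 'cV[F]_p, w != 0 & A *m w = 0.
Proof.
move=> n_lt_p; have : kermx A^T != 0.
  by rewrite kermx_eq0 /row_free mxrank_tr neq_ltn (leq_ltn_trans (rank_leq_row A)).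
move=> /rowV0Pn [v /sub_kermxP vA v_neq0]; exists v^T.
  by rewrite -(inj_eq (@trmx_inj _ _ _)) trmxK trmx0.
by rewrite -[A]trmxK -trmx_mul vA trmx0.
Qed.

Section PeakPerturbation.
Variables (R : realType) (p : nat) (w : 'cV[R]_p).
Hypotheses (p_gt1 : (1 < p)%N) (w_neq0 : w != 0).

Lemma exists_peak_entry : exists j k : 'I_p,
  [/\ j != k, w k 0 != 0 & forall i, `|w i 0| <= `|w k 0|].
Proof.
have p_gt0 : (0 < p)%N by exact: ltnW.
have [k _ wk_max] := @eq_bigmax _ _ _ 0 (Ordinal p_gt0) predT (fun i => `|w i 0|)
  isT (fun i _ => normr_ge0 _).
have w_le_wk i : `|w i 0| <= `|w k 0|.
  by rewrite -wk_max; exact: (le_bigmax 0 (fun i => `|w i 0|) i).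
have wk_neq0 : w k 0 != 0.
  have [i wi] := cV_neq0_entry w_neq0.
  by rewrite -normr_gt0 (lt_le_trans _ (w_le_wk i)) ?normr_gt0.
have [k0|k_neq0] := eqVneq k (Ordinal p_gt0).
  by exists (Ordinal p_gt1), k; split; rewrite // k0; apply/eqP => /(congr1 val).
by exists (Ordinal p_gt0), k; split; rewrite // eq_sym.
Qed.

Lemma exists_flat_perturbation : exists (j : 'I_p) (t M : R),
  [/\ 0 < M, forall i, `|(delta_mx j 0 + t *: w) i 0| <= M
    & 2 * M <= l1norm (delta_mx j 0 + t *: w)].
Proof.
have [j [k [jk wk_neq0 w_le_wk]]] := exists_peak_entry.
have [s [s_norm1 D_neq0]] : exists s : R, `|s| = 1 /\ s * w k 0 - w j 0 != 0.
  have [wjk|] := eqVneq (w k 0 - w j 0) 0; last by exists 1; rewrite normr1 mul1r.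
  exists (-1); rewrite normrN normr1; split => //.
  by move: wk_neq0; apply: contra => /eqP h; apply/eqP; lra.
set t := (s * w k 0 - w j 0)^-1; set v := delta_mx j 0 + t *: w.
have vE i : v i 0 = (i == j)%:R + t * w i 0 by rewrite !mxE andbT.
have vj : `|v j 0| = `|t * w k 0|.
  have -> : v j 0 = s * (t * w k 0).
    by rewrite vE eqxx /t /=; field.
  by rewrite normrM s_norm1 mul1r.
have vk : `|v k 0| = `|t * w k 0| by rewrite vE eq_sym (negbTE jk) add0r.
exists j, t, `|t * w k 0|; split.
- by rewrite normr_gt0 mulf_neq0 ?invr_eq0.
- move=> i; have [->|ij] := eqVneq i j; first by rewrite vj.
  by rewrite vE (negbTE ij) add0r !normrM ler_wpM2l.
- rewrite /l1norm (bigD1 j) //= (bigD1 k) 1?eq_sym //= -/v vj vk.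
  by rewrite mulr_natl mulr2n addrA lerDl sumr_ge0.
Qed.

End PeakPerturbation.

Lemma third_le_dist1_or_dist1_div (R : realFieldType) (d s : R) : 2 <= s ->
  1 / 3 <= `|d - 1| \/ 1 / 3 <= `|d / s - 1|.
Proof.
move=> s_ge2; have s_gt0 : 0 < s by apply: lt_le_trans s_ge2.
have [|d_close] := lerP (1 / 3) `|d - 1|; [by left | right].
have d_le : d / s <= 2 / 3.
  rewrite ler_pdivrMr //; have := le_lt_trans (ler_norm _) d_close; lra.
by rewrite distrC (le_trans _ (ler_norm _)) //; lra.
Qed.

Section WorstError.
Variables (R : realType) (n p : nat) (q : \bar R).
Variables (A : 'M[R]_(n, p)) (delta : 'cV[R]_n -> R).
Hypothesis q_ge0 : (0%:E <= q)%E.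

Lemma le_worst_err x : x != 0 ->
  (`|delta (A *m x) / s_q q x - 1|%:E <= worst_err q A delta)%E.
Proof.
move=> x_neq0; apply: ereal_sup_ge.
by exists `|delta (A *m x) / s_q q x - 1|%:E; first exists x.
Qed.

Lemma worst_err_ge_third : (n < p)%N -> (1 < p)%N ->
  ((1 / 3)%:E <= worst_err q A delta)%E.
Proof.
move=> n_lt_p p_gt1; have [w w_neq0 Aw] := mulmx_ker_neq0 A n_lt_p.
have [j [t [M [M_gt0 v_le_M l1v]]]] := exists_flat_perturbation p_gt1 w_neq0.
set v := delta_mx j 0 + t *: w in v_le_M l1v.
have v_neq0 : v != 0.
  apply: contraTneq l1v => ->.
  rewrite /l1norm big1 => [|i _]; last by rewrite mxE normr0.
  by rewrite -ltNge mulr_gt0.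
have s_ge2 : 2 <= s_q q v.
  by rewrite (le_trans _ (l1norm_div_le_s_q M_gt0 v_le_M v_neq0 q_ge0)) // ler_pdivlMr.
have Av : A *m v = A *m delta_mx j 0 by rewrite mulmxDr -scalemxAr Aw scaler0 addr0.
have [err_e|err_v] := third_le_dist1_or_dist1_div (delta (A *m delta_mx j 0)) s_ge2.
  apply: le_trans (le_worst_err (delta_neq0 _ j)); rewrite s_q_delta // divr1.
  by rewrite lee_fin.
by apply: le_trans (le_worst_err v_neq0); rewrite Av lee_fin.
Qed.

End WorstError.

Lemma minimax_err_ge (R : realType) n p (q : \bar R) : (n < p)%N -> (0%:E <= q)%E ->
  ((1 / 3 - 1 / (2 * p%:R))%:E <= minimax_err n p q)%E.
Proof.
move=> n_lt_p q_ge0; apply: le_ereal_inf_tmp => _ [A _ <-].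
apply: le_ereal_inf_tmp => _ [delta _ <-].
have p_gt0 : (0 < p)%N by apply: leq_ltn_trans n_lt_p.
have [p_gt1|p_le1] := ltnP 1 p.
  apply: le_trans (worst_err_ge_third A delta q_ge0 n_lt_p p_gt1).
  by rewrite lee_fin lerBlDr lerDl divr_ge0 ?mulr_ge0.
have p1 : p%:R = 1 :> R by rewrite (@anti_leq p 1) ?p_le1.
apply: le_trans (le_worst_err q A delta (delta_neq0 _ (Ordinal p_gt0))).
by rewrite lee_fin p1 (le_trans _ (normr_ge0 _)) //; lra.
Qed.

Lemma two_pi_e_ge9 (R : realType) : 9 <= 2 * pi * expR 1 :> R.
Proof.
have e_ge : 9 / 4 <= expR 1 :> R.
  have sqrt_e : 3 / 2 <= expR (1 / 2) :> R by apply: le_trans (expR_ge1Dx _); lra.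
  have -> : expR 1 = expR (1 / 2) * expR (1 / 2) :> R.
    by rewrite -expRD; congr expR; lra.
  nra.
have := @pi_ge2 R; nra.
Qed.

Lemma div_mul_le_third (R : realFieldType) (a b : R) : 3 <= a -> 0 <= b <= 1 ->
  1 / a * b <= 1 / 3.
Proof.
move=> a_ge3 /andP [b_ge0 b_le1]; have a_gt0 : 0 < a by apply: lt_le_trans a_ge3.
rewrite mulrC mul1r ler_pdivrMr //; lra.
Qed.

Lemma one_sub_ratio_in01 (R : realFieldType) n p : (n < p)%N ->
  (0 : R) <= 1 - n%:R / p%:R <= (1 : R).
Proof.
move=> n_lt_p; have p_gt0 : 0 < p%:R :> R by rewrite ltr0n (leq_ltn_trans _ n_lt_p).
rewrite subr_ge0 lerBlDr lerDl divr_ge0 // andbT ler_pdivrMr // mul1r ler_nat.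
exact: ltnW.
Qed.

Theorem theorem4 (R : realType) (n p : nat) : (n < p)%N ->
  (forall q : \bar R, (0%:E <= q)%E -> (q <= 2%:E)%E ->
     ((1 / (2 * pi * expR 1) * (1 - n%:R / p%:R) ^+ 2 - 1 / (2 * p%:R))%:E
        <= minimax_err n p q)%E) /\
  (forall q : \bar R, (2%:E < q)%E ->
     ((1 / Num.sqrt (2 * pi * expR 1)
         * ((1 - n%:R / p%:R) / (1 + Num.sqrt (16 * ln (2 * p%:R))))
         - 1 / (2 * p%:R))%:E
        <= minimax_err n p q)%E).
Proof.
move=> n_lt_p; have /andP [ratio_ge0 ratio_le1] := one_sub_ratio_in01 R n_lt_p.
have c_ge9 := @two_pi_e_ge9 R.
split => [q q_ge0 _ | q q_gt2].
  apply: le_trans (minimax_err_ge n_lt_p q_ge0); rewrite lee_fin lerD2r.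
  apply: div_mul_le_third; first lra.
  by rewrite sqr_ge0 /= expr_le1.
have q_ge0 : (0%:E <= q)%E by apply: le_trans (ltW q_gt2); rewrite lee_fin.
apply: le_trans (minimax_err_ge n_lt_p q_ge0); rewrite lee_fin lerD2r.
apply: div_mul_le_third.
  rewrite -[leLHS]ger0_norm // -sqrtr_sqr ler_sqrt; lra.
have z_ge0 : 0 <= Num.sqrt (16 * ln (2 * p%:R : R)) := sqrtr_ge0 _.
apply/andP; split; first by rewrite divr_ge0 // addr_ge0.
by rewrite ler_pdivrMr ?ltr_pwDl // mul1r; lra.
Qed.
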